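(* Let $l,u$ be integers with $0<l\le u<K$ and $\Pi=\Pi_{l,u}$. Let $\chi^\circ$ be any of the three procedures $\hat\chi,\tilde\chi,\check\chi$ (with some fixed thresholds) and suppose that $\mathrm{FWE}^i_A(\chi^\circ)\le1/2$ for $i\in\{1,2\}$ and all $A\in\Pi_{l,u}$. Then, for $i\in\{1,2\}$ and every $A\in\Pi_{l,u}$, $$\mathrm{pFDR}^i_A(\chi^\circ)\le 2\,\mathrm{FWE}^i_A(\chi^\circ),$$ and $$\mathrm{pFDR}^i_A(\chi)\ge\frac1K\,\mathrm{FWE}^i_A(\chi)\quad\text{for every procedure }\chi.$$
   Context: Let $K\ge2$, $[K]=\{1,\dots,K\}$, $\mathbb N=\{1,2,\dots\}$. There are $K$ independent data streams $X_k=\{X_k(n):n\in\mathbb N\}$; $\mathcal F_k(n)=\sigma(X_k(t):t\le n)$, $\mathcal F(n)=\sigma(\mathcal F_k(n):k\in[K])$. For each $k$, $\mathrm P_k^0,\mathrm P_k^1$ are distributions of $X_k$ mutually absolutely continuous on each $\mathcal F_k(n)$, $\lambda_k(n)=\log\frac{d\mathrm P_k^1}{d\mathrm P_k^0}(\mathcal F_k(n))$. For $A\subseteq[K]$, $\mathrm P_A$ is the joint law with independent streams, $X_k\sim\mathrm P_k^1$ if $k\in A$, $\mathrm P_k^0$ otherwise; $\mathrm E_A$ its expectation. $\Pi_{l,u}=\{A\subseteq[K]:l\le|A|\le u\}$. $\lambda_{(1)}(n)\ge\dots\ge\lambda_{(K)}(n)$ are the ordered LLRs, $p(n)=|\{k:\lambda_k(n)>0\}|$.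 A procedure $\chi=(\mathbf T,\mathbf D)$: $\mathbb N$-valued stopping times $T_k$ w.r.t. $\{\mathcal F(n)\}$ and $\mathcal F(T_k)$-measurable Bernoulli $D_k$; $\mathbf D=\{k:D_k=1\}$. $\mathrm{FWE}^1_A(\chi)=\mathrm P_A(\mathbf D\setminus A\ne\emptyset)$, $\mathrm{FWE}^2_A(\chi)=\mathrm P_A(A\setminus\mathbf D\ne\emptyset)$. Positive false discovery / non-discovery rates: $\mathrm{pFDR}^1_A(\chi)=\mathrm E_A\big[\frac{|\mathbf D\setminus A|}{|\mathbf D|}\,\big|\,|\mathbf D|\ge1\big]$, $\mathrm{pFDR}^2_A(\chi)=\mathrm E_A\big[\frac{|A\setminus\mathbf D|}{K-|\mathbf D|}\,\big|\,K-|\mathbf D|\ge1\big]$. The three procedures (thresholds $a,b,c,d>0$): parallel SPRT $\tilde\chi$: $\tilde T_k=\inf\{n:\lambda_k(n)\notin(-b,a)\}$, $\tilde D_k=\mathbf 1\{\lambda_k(\tilde T_k)\ge a\}$. Proposed $\hat\chi$: $\hat T_k=\hat T_{k,1}\wedge\hat T_{k,2}$, $\hat D_k=1$ iff $\hat T_k=\hat T_{k,1}$, where if $l=u\equiv m$, $\hat T_{k,1}=\inf\{n:\lambda_k(n)\ge\lambda_{(m+1)}(n)+c\}$, $\hat T_{k,2}=\inf\{n:\lambda_k(n)\le\lambda_{(m)}(n)-d\}$, and if $l<u$, $\hat T_{k,1}=\inf\{n:\lambda_k(n)\ge\min\{a,\lambda_{(l+1)}(n)+c\}\}$, $\hat T_{k,2}=\inf\{n:\lambda_k(n)\le\max\{-b,\lambda_{(u)}(n)-d\}\}$.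 Synchronous $\check\chi$: common time $\check T$; if $l=u\equiv m$, $\check T=\inf\{n:\lambda_{(m)}(n)-\lambda_{(m+1)}(n)\ge c\vee d\}$ with the $m$ largest-LLR streams declared signals; if $l<u$, $\check T=\tau_1\wedge\tau_2\wedge\tau_3$, $\tau_1=\inf\{n:\lambda_{(l+1)}(n)\le\min\{-b,-c+\lambda_{(l)}(n)\}\}$, $\tau_2=\inf\{n:\lambda_k(n)\notin(-b,a)\ \forall k,\ l\le p(n)\le u\}$, $\tau_3=\inf\{n:\lambda_{(u)}(n)\ge\max\{a,d+\lambda_{(u+1)}(n)\}\}$, with the $(p(\check T)\vee l)\wedge u$ largest-LLR streams declared signals. *)

From HB Require Import structures.
From mathcomp Require Import all_boot all_order all_algebra.
From mathcomp Require Import all_classical all_reals all_analysis.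
Set Implicit Arguments. Unset Strict Implicit. Unset Printing Implicit Defensive.
Import Order.TTheory GRing.Theory Num.Theory.
Local Open Scope classical_set_scope.
Local Open Scope ring_scope.

Section Defs.
Context {R : realType} {d d' : measure_display}
        {Omega : measurableType d} {V : measurableType d'} {K : nat}.

(* X k t : observation of stream k at time t (t in N = {1,2,...}). *)
Implicit Types (X : 'I_K -> nat -> Omega -> V)
               (lam : 'I_K -> nat -> Omega -> R).

Definition Fk X (k : 'I_K) (n : nat) : set (set Omega) :=
  <<s [set E | exists t B, (1 <= t <= n)%N /\ measurable B /\
                           E = X k t @^-1` B] >>.

Definition Fstream X (k : 'I_K) : set (set Omega) :=
  <<s [set E | exists t B, (1 <= t)%N /\ measurable B /\ E = X k t @^-1` B] >>.

Definition Fall X (n : nat) : set (set Omega) :=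
  <<s [set E | exists k t B, (1 <= t <= n)%N /\ measurable B /\
                             E = X k t @^-1` B] >>.

(* The standing model: measurable streams; under P_A the streams are
   independent, the law of X_k depends only on whether k \in A, and
   lam k n = log dP_k^1/dP_k^0 restricted to F_k(n). *)
Definition stream_model X (P : {set 'I_K} -> probability Omega R) lam : Prop :=
  [/\ (forall k t, measurable_fun setT (X k t)),
      (forall (A : {set 'I_K}) (B : 'I_K -> set Omega), (forall k, Fstream X k (B k)) ->
         fine (P A (\bigcap_(k in [set: 'I_K]) B k)) =
         \prod_(k < K) fine (P A (B k))),
      (forall (A A' : {set 'I_K}) k, (k \in A) = (k \in A') ->
         forall B, Fstream X k B -> P A B = P A' B),
      (forall k n, (1 <= n)%N -> forall B : set R, measurable B ->
         Fk X k n (lam k n @^-1` B)) &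
      (forall k n (A : {set 'I_K}) B, (1 <= n)%N -> k \notin A -> Fk X k n B ->
         P (k |: A) B = (\int[P A]_(x in B) (expR (lam k n x))%:E)%E)].

(* Procedure chi = (T, D): N-valued {F(n)}-stopping times T_k and
   F(T_k)-measurable decisions D_k; D is the set {k : D_k = 1}. *)
Definition is_procedure X (T : 'I_K -> Omega -> nat)
    (D : Omega -> {set 'I_K}) : Prop :=
  forall k, (forall w, (1 <= T k w)%N) /\
    (forall n, Fall X n [set w | T k w = n]) /\
    (forall n, Fall X n [set w | T k w = n /\ k \in D w]).

(* j-th largest value (j >= 1) among x_1, ..., x_K *)
Definition ord_stat (x : 'I_K -> R) (j : nat) : R :=
  nth 0 (sort (fun a b : R => b <= a) [seq x k | k <- enum 'I_K]) j.-1.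

Definition pos_count (x : 'I_K -> R) : nat := #|finset (fun k : 'I_K => 0 < x k)|.

Definition first_time (Q : nat -> Prop) (n : nat) : Prop :=
  [/\ (1 <= n)%N, Q n & forall m, (1 <= m < n)%N -> ~ Q m].

Definition is_tilde (a b : R) lam (T : 'I_K -> Omega -> nat)
    (D : Omega -> {set 'I_K}) : Prop :=
  forall k w,
    let Q := fun n => ~ (- b < lam k n w < a) in
    (exists n, (1 <= n)%N /\ Q n) ->
    first_time Q (T k w) /\ (k \in D w <-> a <= lam k (T k w) w).

Definition hat_cond1 (l u : nat) (a c : R) lam k n w : Prop :=
  let x := fun j => lam j n w in
  if l == u then ord_stat x l.+1 + c <= lam k n w
  else Num.min a (ord_stat x l.+1 + c) <= lam k n w.
Definition hat_cond2 (l u : nat) (b dth : R) lam k n w : Prop :=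
  let x := fun j => lam j n w in
  if l == u then lam k n w <= ord_stat x l - dth
  else lam k n w <= Num.max (- b) (ord_stat x u - dth).

Definition is_hat (l u : nat) (a b c dth : R) lam (T : 'I_K -> Omega -> nat)
    (D : Omega -> {set 'I_K}) : Prop :=
  forall k w,
    let Q := fun n => hat_cond1 l u a c lam k n w \/ hat_cond2 l u b dth lam k n w in
    (exists n, (1 <= n)%N /\ Q n) ->
    first_time Q (T k w) /\ (k \in D w <-> hat_cond1 l u a c lam k (T k w) w).

Definition check_stop (l u : nat) (a b c dth : R) lam n w : Prop :=
  let x := fun j => lam j n w in
  if l == u then is_true (Num.max c dth <= ord_stat x l - ord_stat x l.+1)
  else [\/ ord_stat x l.+1 <= Num.min (- b) (- c + ord_stat x l),
           (forall k, ~ (- b < x k < a)) /\ (l <= pos_count x <= u)%N |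
           Num.max a (dth + ord_stat x u.+1) <= ord_stat x u].
Definition check_nsig (l u : nat) lam n w : nat :=
  if l == u then l else minn (maxn (pos_count (fun j => lam j n w)) l) u.

Definition is_check (l u : nat) (a b c dth : R) lam (T : 'I_K -> Omega -> nat)
    (D : Omega -> {set 'I_K}) : Prop :=
  forall w,
    (exists n, (1 <= n)%N /\ check_stop l u a b c dth lam n w) ->
    exists Tc, [/\ first_time (fun n => check_stop l u a b c dth lam n w) Tc,
      (forall k, T k w = Tc) &
      D w = finset (fun k : 'I_K => ord_stat (fun j => lam j Tc w) (check_nsig l u lam Tc w)
                     <= lam k Tc w)].

Definition FWE1 (PA : probability Omega R) (D : Omega -> {set 'I_K})
    (A : {set 'I_K}) : R := fine (PA [set w | ~~ (D w \subset A)]).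
Definition FWE2 (PA : probability Omega R) (D : Omega -> {set 'I_K})
    (A : {set 'I_K}) : R := fine (PA [set w | ~~ (A \subset D w)]).

(* E[Y | B] = E[Y 1_B] / P(B)  (= 0 by the convention x/0 = 0 if P(B)=0) *)
Definition pFDR1 (PA : probability Omega R) (D : Omega -> {set 'I_K})
    (A : {set 'I_K}) : R :=
  fine (\int[PA]_(w in [set w | (1 <= #|D w|)%N])
          ((#|D w :\: A|%:R / #|D w|%:R)%:E))%E
  / fine (PA [set w | (1 <= #|D w|)%N]).
Definition pFDR2 (PA : probability Omega R) (D : Omega -> {set 'I_K})
    (A : {set 'I_K}) : R :=
  fine (\int[PA]_(w in [set w | (1 <= K - #|D w|)%N])
          ((#|A :\: D w|%:R / (K - #|D w|)%:R)%:E))%E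
  / fine (PA [set w | (1 <= K - #|D w|)%N]).

Definition in_Pi (l u : nat) (A : {set 'I_K}) : bool := (l <= #|A| <= u)%N.

End Defs.

From HB Require Import structures.
From mathcomp Require Import all_boot all_order all_algebra.
From mathcomp Require Import all_classical all_reals all_analysis.
From mathcomp Require Import measurable_realfun lra zify.
Import Order.TTheory GRing.Theory Num.Theory.
Local Open Scope classical_set_scope.
Local Open Scope ring_scope.

(* Write r = |D \ A| / |D| for the false discovery proportion (with 0/0 = 0).
   It lies in [0, 1], vanishes unless D is not contained in A, and is then at
   least 1/K; hence E[r; D <> {}] lies between FWE1/K and FWE1.  pFDR1 divides
   this by P(D <> {}), which is at most 1 and at least FWE1, giving the lower
   bound.  When A is nonempty, D = {} misses a signal, so P(D <> {}) is at
   least 1 - FWE2 >= 1/2, giving the upper bound.  The rates of the second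
   kind are those of the first kind for the complementary decisions ~D
   against ~A. *)

Section FineProbability.
Context {R : realType} {d : measure_display} {Omega : measurableType d}
  (P : probability Omega R).

Lemma fine_probability_ge0 (E : set Omega) : 0 <= fine (P E).
Proof. exact/fine_ge0/measure_ge0. Qed.

Lemma fine_probability_le {E F : set Omega} :
  measurable E -> measurable F -> E `<=` F -> fine (P E) <= fine (P F).
Proof.
move=> mE mF EF; apply: fine_le; try exact: fin_num_measure.
exact: le_measure (mem_set mE) (mem_set mF) EF.
Qed.

Lemma fine_probability_le1 {E : set Omega} : measurable E -> fine (P E) <= 1.
Proof.
by move=> mE; rewrite -[1]/(fine 1%:E) -(probability_setT P) fine_probability_le.
Qed.

Lemma fine_probability_setC {E : set Omega} :
  measurable E -> fine (P (~` E)) = 1 - fine (P E).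
Proof.
by move=> mE; rewrite probability_setC // -(fineK (fin_num_measure P E mE)).
Qed.

Lemma fine_integral_bounds (E F : set Omega) (f : Omega -> R) (c : R) :
  measurable E -> measurable F -> F `<=` E ->
  measurable_fun E (EFin \o f) ->
  (forall w, E w -> 0 <= f w <= 1) -> (forall w, E w -> ~ F w -> f w = 0) ->
  0 <= c -> (forall w, F w -> c <= f w) ->
  c * fine (P F) <= fine (\int[P]_(w in E) (f w)%:E)%E <= fine (P F).
Proof.
move=> mE mF FE mf f01 f0 c0 cf.
have f_ge0 w : E w -> (0 <= (f w)%:E :> \bar R)%E by rewrite lee_fin => /f01/andP[].
set I := (\int[P]_(w in E) (f w)%:E)%E.
have I_le : (I <= P F)%E.
  rewrite -(setIidl FE) -integral_indic //; apply: ge0_le_integral => //.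
  - by apply/measurable_EFinP; exact: measurable_indic.
  - move=> w Ew; rewrite lee_fin indicE.
    have [/set_mem wF|wF] := boolP (w \in F); first by case/andP: (f01 w Ew).
    by rewrite f0 // => /mem_set; apply/negP.
have le_I : (c%:E * P F <= I)%E.
  rewrite -integral_cst //; apply: (@le_trans _ _ (\int[P]_(w in F) (f w)%:E)%E).
    by apply: ge0_le_integral => //; exact: measurable_funS mf.
  exact: ge0_subset_integral.
have PF_fin : P F \is a fin_num by exact: fin_num_measure.
have I_fin : I \is a fin_num.
  by rewrite ge0_fin_numE ?integral_ge0 // (le_lt_trans I_le) // ltey_eq PF_fin.
rewrite -(fineK PF_fin) -(fineK I_fin) -EFinM !lee_fin in le_I I_le.
by rewrite le_I I_le.
Qed.

End FineProbability.

Section FalseDiscoveryProportion.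
Context {R : realType} {K : nat}.
Implicit Types S A : {set 'I_K}.

Definition fdp S A : R := #|S :\: A|%:R / #|S|%:R.

Lemma fdp_ge0 S A : 0 <= fdp S A.
Proof. by rewrite divr_ge0. Qed.

Lemma fdp_le1 S A : fdp S A <= 1.
Proof.
rewrite /fdp; have [->|S_gt0] := posnP #|S|; first by rewrite invr0 mulr0.
by rewrite ler_pdivrMr ?ltr0n // mul1r ler_nat subset_leq_card // finset.subsetDl.
Qed.

Lemma fdp_eq0 S A : S \subset A -> fdp S A = 0.
Proof. by rewrite -finset.setD_eq0 => /eqP SA; rewrite /fdp SA cards0 mul0r. Qed.

Lemma invK_le_fdp S A : ~~ (S \subset A) -> K%:R^-1 <= fdp S A.
Proof.
case/subsetPn=> x xS xA.
have SA_gt0 : (0 < #|S :\: A|)%N by apply/card_gt0P; exists x; rewrite inE xS xA.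
have S_gt0 : (0 < #|S|)%N by apply/card_gt0P; exists x.
have S_leK : (#|S| <= K)%N by rewrite -[K in (_ <= K)%N]card_ord max_card.
rewrite /fdp ler_pdivlMr ?ltr0n // mulrC ler_pdivrMr ?ltr0n; last by lia.
by rewrite -natrM ler_nat; nia.
Qed.

End FalseDiscoveryProportion.

Definition measurable_decision {d : measure_display} {Omega : measurableType d}
    {K : nat} (D : Omega -> {set 'I_K}) : Prop :=
  forall Q : {set 'I_K} -> Prop, measurable [set w | Q (D w)].

Lemma measurable_decision_fun {d : measure_display} {Omega : measurableType d}
    {K : nat} {R : realType} {D : Omega -> {set 'I_K}} {E : set Omega}
    (g : {set 'I_K} -> \bar R) :
  measurable_decision D -> measurable E -> measurable_fun E (g \o D).
Proof. by move=> mD mE _ Y mY; apply: measurableI mE (mD (fun S => Y (g S))). Qed.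

Section PositiveFalseDiscoveryRate.
Context {R : realType} {d : measure_display} {Omega : measurableType d}
  {K : nat} {P : probability Omega R} {D : Omega -> {set 'I_K}}.
Hypothesis mD : measurable_decision D.
Implicit Types A : {set 'I_K}.

Lemma fdp_integral_bounds A :
  K%:R^-1 * FWE1 P D A
  <= fine (\int[P]_(w in [set w | (1 <= #|D w|)%N]) (fdp (D w) A)%:E)%E
  <= FWE1 P D A.
Proof.
apply: fine_integral_bounds (mD (fun S => (1 <= #|S|)%N))
  (mD (fun S => ~~ (S \subset A))) _ _ _ _ _ _.
- by move=> w /= /subsetPn[x xD _]; apply/card_gt0P; exists x.
- exact: measurable_decision_fun (fun S => (fdp S A)%:E) mD
    (mD (fun S => (1 <= #|S|)%N)).
- by move=> w _; rewrite fdp_ge0 fdp_le1.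
- by move=> w _ /negP; rewrite negbK => /fdp_eq0.
- by rewrite invr_ge0.
- by move=> w; apply: invK_le_fdp.
Qed.

Lemma pFDR1_le2FWE1 A :
  (0 < #|A|)%N -> FWE2 P D A <= 1/2 -> pFDR1 P D A <= 2 * FWE1 P D A.
Proof.
move=> A_gt0 FWE2_le.
have mE := mD (fun S => (1 <= #|S|)%N).
have /andP[lowI upI] := fdp_integral_bounds A.
have FWE1_ge0 : 0 <= FWE1 P D A := fine_probability_ge0 P _.
have invK_ge0 : 0 <= K%:R^-1 :> R by rewrite invr_ge0.
have empty_missed : ~` [set w | (1 <= #|D w|)%N] `<=` [set w | ~~ (A \subset D w)].
  move=> w; rewrite /mkset /= => D_empty; apply/negP => /subset_leq_card A_le.
  exact/D_empty/(leq_trans A_gt0 A_le).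
have := fine_probability_le P (measurableC mE)
  (mD (fun S => ~~ (A \subset S))) empty_missed.
rewrite fine_probability_setC // -/(FWE2 P D A) => PE_ge.
rewrite /pFDR1 ler_pdivrMr; [nra | lra].
Qed.

Lemma FWE1_le_pFDR1 A : FWE1 P D A / K%:R <= pFDR1 P D A.
Proof.
have mE := mD (fun S => (1 <= #|S|)%N).
have /andP[lowI _] := fdp_integral_bounds A.
have FWE1_le : FWE1 P D A <= fine (P [set w | (1 <= #|D w|)%N]).
  apply: fine_probability_le (mD (fun S => ~~ (S \subset A))) mE _.
  by move=> w /= /subsetPn[x xD _]; apply/card_gt0P; exists x.
have PE_le1 := fine_probability_le1 P mE.
have FWE1_ge0 : 0 <= FWE1 P D A := fine_probability_ge0 P _.
have invK_ge0 : 0 <= K%:R^-1 :> R by rewrite invr_ge0.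
rewrite /pFDR1; set PE := fine (P _) in FWE1_le PE_le1 *.
have [PE0|PE_gt0] := eqVneq PE 0.
  have FWE1_0 : FWE1 P D A = 0 by apply/eqP; rewrite eq_le FWE1_ge0 -PE0 FWE1_le.
  by rewrite PE0 FWE1_0 invr0 !mul0r mulr0.
have PE_pos : 0 < PE by rewrite lt_def PE_gt0 fine_probability_ge0.
rewrite ler_pdivlMr // mulrC (le_trans _ lowI) //.
have kF_ge0 : 0 <= K%:R^-1 * FWE1 P D A by rewrite mulr_ge0.
nra.
Qed.

End PositiveFalseDiscoveryRate.

Section Complement.
Context {R : realType} {d : measure_display} {Omega : measurableType d}
  {K : nat} {P : probability Omega R} {D : Omega -> {set 'I_K}}.
Implicit Types S A : {set 'I_K}.

Lemma measurable_decisionC :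
  measurable_decision D -> measurable_decision (fun w => ~: D w).
Proof. by move=> mD Q; apply: (mD (fun S => Q (~: S))). Qed.

Lemma FWE1_setC A : FWE1 P D A = FWE2 P (fun w => ~: D w) (~: A).
Proof. by congr (fine (P _)); apply/funext => w; rewrite /= finset.setCS. Qed.

Lemma FWE2_setC A : FWE2 P D A = FWE1 P (fun w => ~: D w) (~: A).
Proof. by congr (fine (P _)); apply/funext => w; rewrite /= finset.setCS. Qed.

Lemma pFDR2_setC A : pFDR2 P D A = pFDR1 P (fun w => ~: D w) (~: A).
Proof.
have cardC S : #|~: S| = (K - #|S|)%N by have := cardsC S; rewrite card_ord; lia.
have setDC S : ~: S :\: ~: A = A :\: S.
  by rewrite !finset.setDE finset.setCK finset.setIC.
have nonempty_eq : [set w | (1 <= #|~: D w|)%N] = [set w | (1 <= K - #|D w|)%N].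
  by apply/funext => w; rewrite /= cardC.
have ratio_eq : (fun w => (#|~: D w :\: ~: A|%:R / #|~: D w|%:R)%:E) =
    (fun w => (#|A :\: D w|%:R / (K - #|D w|)%:R)%:E :> \bar R).
  by apply/funext => w; rewrite cardC setDC.
by rewrite /pFDR1 /pFDR2 nonempty_eq ratio_eq.
Qed.

End Complement.

Section SecondKind.
Context {R : realType} {d : measure_display} {Omega : measurableType d}
  {K : nat} {P : probability Omega R} {D : Omega -> {set 'I_K}}.
Hypothesis mD : measurable_decision D.
Implicit Types A : {set 'I_K}.

Lemma pFDR2_le2FWE2 A :
  (#|A| < K)%N -> FWE1 P D A <= 1/2 -> pFDR2 P D A <= 2 * FWE2 P D A.
Proof.
move=> A_ltK FWE1_le; rewrite pFDR2_setC FWE2_setC.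
apply: (pFDR1_le2FWE1 (measurable_decisionC mD)); last by rewrite -FWE1_setC.
by have := cardsC A; rewrite card_ord; lia.
Qed.

Lemma FWE2_le_pFDR2 A : FWE2 P D A / K%:R <= pFDR2 P D A.
Proof.
by rewrite pFDR2_setC FWE2_setC; exact: (FWE1_le_pFDR1 (measurable_decisionC mD)).
Qed.

End SecondKind.

Section ProcedureDecision.
Context {d d' : measure_display} {Omega : measurableType d} {V : measurableType d'}
  {K : nat} {X : 'I_K -> nat -> Omega -> V} {T : 'I_K -> Omega -> nat}
  {D : Omega -> {set 'I_K}}.
Hypothesis mX : forall k t, measurable_fun setT (X k t).
Hypothesis procD : is_procedure X T D.

Lemma Fall_measurable n E : Fall X n E -> measurable E.
Proof.
move: E; apply: smallest_sub; first exact: sigma_algebra_measurable.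
by move=> _ [k [t [B [_ [mB ->]]]]]; rewrite -(setTI (_ @^-1` _)); apply: mX.
Qed.

Lemma procedure_mem_measurable k : measurable [set w | k \in D w].
Proof.
have -> : [set w | k \in D w] = \bigcup_n [set w | T k w = n /\ k \in D w].
  by apply/seteqP; split=> [w kD | w [n _ [_ kD]]] //; exists (T k w).
apply: bigcupT_measurable => n.
exact: Fall_measurable (proj2 (proj2 (procD k)) n).
Qed.

Lemma procedure_measurable_decision : measurable_decision D.
Proof.
have mem_eq_measurable k b : measurable [set w | (k \in D w) = b].
  have -> : [set w | (k \in D w) = b] =
      if b then [set w | k \in D w] else ~` [set w | k \in D w].
    by case: b; apply/seteqP; split=> w; rewrite /mkset /=; case: (k \in D w).
  by case: b; [|apply: measurableC]; apply: procedure_mem_measurable.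
have decision_eq S : measurable [set w | D w = S].
  have -> : [set w | D w = S] =
      \bigcap_(k in [set: 'I_K]) [set w | (k \in D w) = (k \in S)].
    apply/seteqP; split=> w /=; first by move=> DS k _; rewrite /mkset DS.
    by move=> DS; apply/setP => k; exact: DS.
  by apply: fin_bigcap_measurable => //; exact: finite_finset.
move=> Q; have -> : [set w | Q (D w)] = \bigcup_(S in Q) [set w | D w = S].
  by apply/seteqP; split=> [w QD | w [S QS /= ->]] //; exists (D w).
by apply: fin_bigcup_measurable => //; exact: finite_finset.
Qed.

End ProcedureDecision.

Theorem proposition8p1 (R : realType) (d d' : measure_display)
    (Omega : measurableType d) (V : measurableType d') (K : nat)
    (X : 'I_K -> nat -> Omega -> V) (P : {set 'I_K} -> probability Omega R)
    (lam : 'I_K -> nat -> Omega -> R)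
    (hmodel : stream_model X P lam)
    (l u : nat) (hl : (0 < l)%N) (hlu : (l <= u)%N) (huK : (u < K)%N)
    (a b c dth : R) (ha : 0 < a) (hb : 0 < b) (hc : 0 < c) (hd : 0 < dth)
    (T : 'I_K -> Omega -> nat) (D : Omega -> {set 'I_K})
    (hproc : is_procedure X T D)
    (hwhich : is_hat l u a b c dth lam T D \/ is_tilde a b lam T D \/
              is_check l u a b c dth lam T D)
    (hFWE : forall A, in_Pi l u A ->
              FWE1 (P A) D A <= 1/2 /\ FWE2 (P A) D A <= 1/2) :
  (forall A, in_Pi l u A ->
     pFDR1 (P A) D A <= 2 * FWE1 (P A) D A /\
     pFDR2 (P A) D A <= 2 * FWE2 (P A) D A) /\
  (forall (T' : 'I_K -> Omega -> nat) (D' : Omega -> {set 'I_K}),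
     is_procedure X T' D' -> forall A, in_Pi l u A ->
     FWE1 (P A) D' A / K%:R <= pFDR1 (P A) D' A /\
     FWE2 (P A) D' A / K%:R <= pFDR2 (P A) D' A).
Proof.
case: hmodel => mX _ _ _ _.
split=> [A hA | T' D' procD' A _].
- have /andP[lA Au] := hA; have [FWE1_le FWE2_le] := hFWE A hA.
  have mD := procedure_measurable_decision mX hproc.
  split; [apply: pFDR1_le2FWE1 => //; exact: leq_trans hl lA
         | apply: pFDR2_le2FWE2 => //; exact: leq_ltn_trans Au huK].
- have mD' := procedure_measurable_decision mX procD'.
  by split; [apply: FWE1_le_pFDR1 | apply: FWE2_le_pFDR2].
Qed.
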